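(* Let $\mathbf{U},\mathbf{V}$ be $D\times D$ unimodular matrices and $\bm{\Lambda}_1,\dots,\bm{\Lambda}_L$ nonsingular diagonal integer matrices, and let $\mathbf{M}_i=\mathbf{U}\bm{\Lambda}_i\mathbf{V}$. Let $\bm{\Lambda}=\mathrm{diag}(\Lambda(1,1),\dots,\Lambda(D,D))$ where $\Lambda(j,j)$ is the (positive) lcm of the integers $\Lambda_1(j,j),\dots,\Lambda_L(j,j)$. Then for every unimodular $\mathbf{B}$, $\mathbf{R}=\mathbf{U}\bm{\Lambda}\mathbf{B}$ is an lcrm of $\mathbf{M}_1,\dots,\mathbf{M}_L$, and every $\mathbf{m}\in\mathcal{N}(\mathbf{R})$ is uniquely determined by its remainders $\mathbf{r}_i=\langle\mathbf{m}\rangle_{\mathbf{M}_i}$. Furthermore, when $\mathbf{B}=\mathbf{I}$, setting $\mathbf{a}=\mathbf{U}^{-1}\mathbf{m}$ and $\bm{\zeta}_i=\langle\mathbf{U}^{-1}\mathbf{r}_i\rangle_{\bm{\Lambda}_i}$, each component $a(j)$ satisfies $0\le a(j)<\Lambda(j,j)$ and is the unique integer in this range with $a(j)\equiv\zeta_i(j)\pmod{|\Lambda_i(j,j)|}$ for all $1\le i\le L$.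
   Context: Unimodular means integer with determinant $\pm1$. An lcrm of integer matrices $\mathbf{M}_1,\dots,\mathbf{M}_L$ is a nonsingular integer $\mathbf{R}=\mathbf{M}_i\mathbf{P}_i$ (integer $\mathbf{P}_i$, all $i$) such that every such common right multiple equals $\mathbf{R}\mathbf{A}$ for integer $\mathbf{A}$. $\mathcal{N}(\mathbf{M})=\{\mathbf{k}\in\mathbb{Z}^D:\mathbf{k}=\mathbf{M}\mathbf{x},\ \mathbf{x}\in[0,1)^D\}$; $\langle\mathbf{m}\rangle_{\mathbf{M}}$ is the unique $\mathbf{r}\in\mathcal{N}(\mathbf{M})$ with $\mathbf{m}-\mathbf{r}\in\mathbf{M}\mathbb{Z}^D$. $a(j)$, $\zeta_i(j)$ denote $j$-th components, $\Lambda_i(j,j)$ the $j$-th diagonal entry. *)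

From HB Require Import structures.
From mathcomp Require Import all_boot all_order all_algebra.
From Stdlib Require Import ClassicalEpsilon.
Set Implicit Arguments. Unset Strict Implicit. Unset Printing Implicit Defensive.
Import Order.TTheory GRing.Theory Num.Theory.
Local Open Scope ring_scope.

Definition unimodular (D : nat) (A : 'M[int]_D) : Prop :=
  \det A = 1 \/ \det A = -1.

Definition lcrm (D L : nat) (M : 'I_L -> 'M[int]_D) (R : 'M[int]_D) : Prop :=
  [/\ \det R != 0,
      (forall i, exists P : 'M[int]_D, R = M i *m P) &
      (forall S : 'M[int]_D, (forall i, exists P : 'M[int]_D, S = M i *m P) ->
         exists A : 'M[int]_D, S = R *m A)].

(* N(M) = { k in Z^D : k = M x, x in [0,1)^D }.  For nonsingular integer M,
   such an x is necessarily rational, so x ranges over rat vectors. *)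
Definition inN (D : nat) (M : 'M[int]_D) (k : 'cV[int]_D) : Prop :=
  exists x : 'cV[rat]_D,
    (forall j, 0 <= x j 0 < 1) /\
    map_mx (fun z : int => z%:~R) k = map_mx (fun z : int => z%:~R) M *m x.

Definition is_rem (D : nat) (M : 'M[int]_D) (m r : 'cV[int]_D) : Prop :=
  inN M r /\ exists y : 'cV[int]_D, m - r = M *m y.

Definition remv (D : nat) (M : 'M[int]_D) (m : 'cV[int]_D) : 'cV[int]_D :=
  epsilon (inhabits 0) (is_rem M m).

From HB Require Import structures.
From mathcomp Require Import all_boot all_order all_algebra.
From mathcomp Require Import zify.
From Stdlib Require Import ClassicalEpsilon.
Import Order.TTheory GRing.Theory Num.Theory.
Local Open Scope ring_scope.
Set Implicit Arguments. Unset Strict Implicit.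

(* Conjugating by the unimodular U and V reduces everything to the
   diagonal matrices diag(lam i), whose common right multiples are exactly the
   multiples of the entrywise lcm diag(Lam).  Two points of N(R) congruent
   modulo R coincide, because their difference is R c with c = x - x' for
   x, x' in [0,1)^D, which forces the integer vector c to vanish.  For B = I
   the same reasoning, done entrywise on a = U^-1 m, is the Chinese remainder
   theorem on each diagonal entry. *)

Local Notation ratmx := (map_mx (fun z : int => z%:~R : rat)).

Lemma unimodular_unitmx (D : nat) (A : 'M[int]_D) : unimodular A -> A \in unitmx.
Proof. by rewrite unitmxE; case=> ->; rewrite ?unitr1 ?unitrN1. Qed.

Lemma unimodular_det_neq0 (D : nat) (A : 'M[int]_D) : unimodular A -> \det A != 0.
Proof. by case=> ->; rewrite ?oppr_eq0 oner_eq0. Qed.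

Lemma ratmx_unitmx (D : nat) (M : 'M[int]_D) : \det M != 0 -> ratmx M \in unitmx.
Proof. by move=> hM; rewrite unitmxE (det_map_mx (intmul (1 : rat))) unitfE intr_eq0. Qed.

Lemma is_rem_exists (D : nat) (M : 'M[int]_D) (m : 'cV[int]_D) :
  \det M != 0 -> exists r, is_rem M m r.
Proof.
move=> hM; set x := invmx (ratmx M) *m ratmx m.
pose y : 'cV[int]_D := \col_j Num.floor (x j 0).
exists (m - M *m y); split; last by exists y; rewrite opprB addrC subrK.
exists (x - ratmx y); split.
  move=> j; have /andP[floor_le lt_floorD1] := floor_itv (x j 0).
  have -> : (x - ratmx y) j 0 = x j 0 - (Num.floor (x j 0))%:~R by rewrite !mxE.
  by rewrite subr_ge0 floor_le ltrBlDl; move: lt_floorD1; rewrite intrD.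
by rewrite (map_mxB (intmul (1 : rat))) map_mxM mulmxBr mulmxA mulmxV ?ratmx_unitmx ?mul1mx.
Qed.

Lemma remvP (D : nat) (M : 'M[int]_D) (m : 'cV[int]_D) :
  \det M != 0 -> is_rem M m (remv M m).
Proof. by move=> hM; apply: epsilon_spec; apply: is_rem_exists. Qed.

Lemma sub_remv (D : nat) (M : 'M[int]_D) (m : 'cV[int]_D) :
  \det M != 0 -> exists y, m - remv M m = M *m y.
Proof. by move=> /(remvP m) []. Qed.

Lemma remv_eq_sub (D : nat) (M : 'M[int]_D) (m m' : 'cV[int]_D) :
  \det M != 0 -> remv M m = remv M m' -> exists y, m - m' = M *m y.
Proof.
move=> hM eq_rem; have [y ey] := sub_remv m hM; have [y' ey'] := sub_remv m' hM.
by exists (y - y'); rewrite mulmxBr -ey -ey' eq_rem opprB addrA subrK.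
Qed.

Lemma inN_eq (D : nat) (R : 'M[int]_D) (m m' c : 'cV[int]_D) :
  \det R != 0 -> inN R m -> inN R m' -> m - m' = R *m c -> m = m'.
Proof.
move=> hR [x [hx ex]] [x' [hx' ex']] e.
have ec : ratmx c = x - x'.
  apply: (can_inj (mulKmx (ratmx_unitmx hR))).
  by rewrite -map_mxM -e (map_mxB (intmul (1 : rat))) ex ex' mulmxBr.
suff c0 : c = 0 by apply/eqP; rewrite -subr_eq0 e c0 mulmx0.
apply/matrixP => j k; rewrite (ord1 k) mxE.
have := congr1 (fun A : 'cV[rat]_D => A j 0) ec; rewrite !mxE => ecj.
have /andP[x_ge0 x_lt1] := hx j; have /andP[x'_ge0 x'_lt1] := hx' j.
have c_lt1 : c j 0 < 1.
  by rewrite -(ltrz1 rat) ecj; apply: le_lt_trans x_lt1; rewrite lerBlDr lerDl.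
have Nc_lt1 : - c j 0 < 1.
  rewrite -(ltrz1 rat) intrN ecj opprB.
  by apply: le_lt_trans x'_lt1; rewrite lerBlDr lerDl.
lia.
Qed.

Lemma inN_unimodular (D : nat) (U R : 'M[int]_D) (m : 'cV[int]_D) :
  U \in unitmx -> inN (U *m R) m -> inN R (invmx U *m m).
Proof.
move=> hU [x [hx ex]]; exists x; split=> //.
by rewrite map_mxM ex mulmxA -map_mxM mulKmx.
Qed.

Lemma inN_diag (D : nat) (d : 'rV[int]_D) (a : 'cV[int]_D) :
  (forall j, 0 < d ord0 j) -> inN (diag_mx d) a -> forall j, 0 <= a j ord0 < d ord0 j.
Proof.
move=> d_gt0 [x [hx ex]] j; have /andP[x_ge0 x_lt1] := hx j.
have := congr1 (fun A : 'cV[rat]_D => A j 0) ex.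
rewrite map_diag_mx mul_diag_mx !mxE => eaj.
have d_gt0j := d_gt0 j.
rewrite -(ler0z rat) -(ltr_int rat) eaj (gtr_pMr (x j 0)) ?ltr0z // x_lt1 andbT.
by rewrite mulr_ge0 // ler0z ltW.
Qed.

Lemma lcrm_col (D L : nat) (M : 'I_L -> 'M[int]_D) (R : 'M[int]_D) (v : 'cV[int]_D) :
  lcrm M R -> (forall i, exists p, v = M i *m p) -> exists c, v = R *m c.
Proof.
case: D M R v => [|n] M R v [_ _ lcrmR] hv; first by exists 0; rewrite !flatmx0.
(* [lcrm] only quantifies over square multiples: apply it to the matrix whose
   columns are all equal to v. *)
have [|A eA] := lcrmR (v *m const_mx 1).
  by move=> i; have [p ->] := hv i; exists (p *m const_mx 1); rewrite mulmxA.
exists (A *m delta_mx 0 0); rewrite mulmxA -eA -mulmxA -colE col_const.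
suff -> : const_mx 1 = 1%:M :> 'M[int]_1 by rewrite mulmx1.
by apply/matrixP => i j; rewrite !ord1 !mxE.
Qed.

Lemma lcrm_remv_inj (D L : nat) (M : 'I_L -> 'M[int]_D) (R : 'M[int]_D)
    (m m' : 'cV[int]_D) :
  (forall i, \det (M i) != 0) -> lcrm M R -> inN R m -> inN R m' ->
  (forall i, remv (M i) m = remv (M i) m') -> m = m'.
Proof.
move=> hM lcrmR hm hm' eq_rem; have [R_neq0 _ _] := lcrmR.
have [c ec] := lcrm_col lcrmR (fun i => remv_eq_sub (hM i) (eq_rem i)).
exact: inN_eq R_neq0 hm hm' ec.
Qed.

Lemma mulmx_diag_dvdz (D n : nat) (d : 'rV[int]_D) (W : 'M[int]_(D, n)) :
  (forall j k, (d ord0 j %| W j k)%Z) -> exists C, W = diag_mx d *m C.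
Proof.
move=> dvd_dW; exists (\matrix_(j, k) (W j k %/ d ord0 j)%Z).
by apply/matrixP => j k; rewrite mul_diag_mx !mxE mulrC divzK.
Qed.

Lemma eqz_mod_mulmx_diag (D : nat) (d : 'rV[int]_D) (a b c : 'cV[int]_D) j :
  a - b = diag_mx d *m c -> (a j ord0 = b j ord0 %[mod `|d ord0 j|])%Z.
Proof.
move=> /(congr1 (fun A : 'cV[int]_D => A j ord0)); rewrite mul_diag_mx !mxE => e.
by apply/eqP; rewrite eqz_mod_dvd e dvdzE -abszE absz_nat abszM dvdn_mulr.
Qed.

Lemma eqz_mod_small (n t a : int) :
  0 <= t < n -> 0 <= a < n -> (t = a %[mod n])%Z -> t = a.
Proof. by move=> /modz_small {2}<- /modz_small {2}<-. Qed.

Lemma det_diag_neq0 (R : idomainType) (D : nat) (d : 'rV[R]_D) :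
  (forall j, d ord0 j != 0) -> \det (diag_mx d) != 0.
Proof. by move=> d_neq0; rewrite det_diag; apply/prodf_neq0 => j _; apply: d_neq0. Qed.

Definition lcm_row (D L : nat) (lam : 'I_L -> 'rV[int]_D) : 'rV[int]_D :=
  \row_j ((\big[lcmn/1%N]_(i < L) `|lam i ord0 j|%N)%:Z).

Section LcmRow.

Variables (D L : nat) (lam : 'I_L -> 'rV[int]_D).

Lemma lcm_row_gt0 : (forall i j, lam i ord0 j != 0) -> forall j, 0 < lcm_row lam ord0 j.
Proof.
move=> lam_neq0 j; rewrite mxE ltz_nat.
apply: (big_ind (fun d => 0 < d)%N) => // [a b a_gt0 b_gt0|i _].
  by rewrite lcmn_gt0 a_gt0.
by rewrite absz_gt0.
Qed.

Lemma dvdz_lcm_row i j : (lam i ord0 j %| lcm_row lam ord0 j)%Z.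
Proof. by rewrite mxE dvdzE absz_nat; apply: (biglcmn_sup i). Qed.

Lemma eqz_mod_lcm_row j (t a : int) :
  (forall i, (t = a %[mod `|lam i ord0 j|])%Z) -> (t = a %[mod lcm_row lam ord0 j])%Z.
Proof.
move=> t_eq_a; apply/eqP; rewrite eqz_mod_dvd mxE dvdzE absz_nat.
apply/dvdn_biglcmP => i _; have /eqP := t_eq_a i.
by rewrite eqz_mod_dvd dvdzE -abszE absz_nat.
Qed.

Lemma diag_lcm_row_multiple i : exists P, diag_mx (lcm_row lam) = diag_mx (lam i) *m P.
Proof.
exists (diag_mx (\row_j (lcm_row lam ord0 j %/ lam i ord0 j)%Z)).
rewrite mulmx_diag; congr (diag_mx _); apply/rowP => j.
by rewrite [RHS]mxE [X in _ * X]mxE mulrC divzK ?dvdz_lcm_row.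
Qed.

Lemma diag_lcm_row_common n (W : 'M[int]_(D, n)) :
  (forall i, exists P, W = diag_mx (lam i) *m P) -> exists C, W = diag_mx (lcm_row lam) *m C.
Proof.
move=> common_W; apply: mulmx_diag_dvdz => j k.
rewrite mxE dvdzE absz_nat; apply/dvdn_biglcmP => i _.
by have [P ->] := common_W i; rewrite mul_diag_mx mxE abszM dvdn_mulr.
Qed.

End LcmRow.

Lemma lcrm_diag_lcm_row (D L : nat) (U V B : 'M[int]_D) (lam : 'I_L -> 'rV[int]_D) :
  unimodular U -> unimodular V -> unimodular B -> (forall i j, lam i ord0 j != 0) ->
  lcrm (fun i => U *m diag_mx (lam i) *m V) (U *m diag_mx (lcm_row lam) *m B).
Proof.
move=> hU hV hB lam_neq0; have hUu := unimodular_unitmx hU.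
split.
- rewrite !det_mulmx !mulf_neq0 ?det_diag_neq0 ?unimodular_det_neq0 // => j.
  by rewrite gt_eqF ?lcm_row_gt0.
- move=> i; have [P eP] := diag_lcm_row_multiple lam i.
  exists (invmx V *m P *m B).
  by rewrite -!mulmxA mulKVmx ?unimodular_unitmx // eP !mulmxA.
- move=> S common_S.
  have [|C eC] := @diag_lcm_row_common _ _ lam _ (invmx U *m S).
    move=> i; have [P ->] := common_S i.
    by exists (V *m P); rewrite !mulmxA mulVmx // mul1mx.
  exists (invmx B *m C).
  by rewrite -mulmxA mulKVmx ?unimodular_unitmx // -mulmxA -eC mulKVmx.
Qed.

Lemma sub_remv_conj (D : nat) (U N V : 'M[int]_D) (m : 'cV[int]_D) :
  U \in unitmx -> \det (U *m N *m V) != 0 -> \det N != 0 ->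
  exists c, invmx U *m m - remv N (invmx U *m remv (U *m N *m V) m) = N *m c.
Proof.
move=> hU hM hN; have [y ey] := sub_remv m hM.
have [y' ey'] := sub_remv (invmx U *m remv (U *m N *m V) m) hN.
exists (V *m y + y'); rewrite mulmxDr -ey' mulmxA.
have -> : N *m V *m y = invmx U *m (m - remv (U *m N *m V) m).
  by rewrite ey !mulmxA mulVmx // mul1mx.
by rewrite mulmxBr addrA subrK.
Qed.

Theorem corollary4 (D L : nat) (U V : 'M[int]_D) (lam : 'I_L -> 'rV[int]_D)
  (hU : unimodular U) (hV : unimodular V)
  (hlam : forall (i : 'I_L) (j : 'I_D), lam i ord0 j != 0) :
  let M := fun i : 'I_L => U *m diag_mx (lam i) *m V in
  let Lam : 'M[int]_D :=
    diag_mx (\row_j ((\big[lcmn/1%N]_(i < L) `|lam i ord0 j|%N)%:Z)) in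
  (forall B : 'M[int]_D, unimodular B ->
     lcrm M (U *m Lam *m B) /\
     (forall m m' : 'cV[int]_D, inN (U *m Lam *m B) m -> inN (U *m Lam *m B) m' ->
        (forall i, remv (M i) m = remv (M i) m') -> m = m')) /\
  (forall m : 'cV[int]_D, inN (U *m Lam) m ->
     let a := invmx U *m m in
     let zeta := fun i : 'I_L => remv (diag_mx (lam i)) (invmx U *m remv (M i) m) in
     forall j : 'I_D,
       [/\ 0 <= a j ord0, a j ord0 < Lam j j,
           (forall i, (a j ord0 = zeta i j ord0 %[mod `|lam i ord0 j|])%Z) &
           (forall t : int, 0 <= t -> t < Lam j j ->
              (forall i, (t = zeta i j ord0 %[mod `|lam i ord0 j|])%Z) -> t = a j ord0)]).
Proof.
move=> M Lam; have hUu := unimodular_unitmx hU.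
have diag_lam_neq0 i : \det (diag_mx (lam i)) != 0 by apply: det_diag_neq0.
have M_neq0 i : \det (M i) != 0.
  by rewrite !det_mulmx !mulf_neq0 ?diag_lam_neq0 ?unimodular_det_neq0.
split=> [B hB | m hm a zeta j].
  have lcrmR := lcrm_diag_lcm_row hU hV hB hlam.
  by split=> // m m'; apply: lcrm_remv_inj M_neq0 lcrmR.
have Lam_jj : Lam j j = lcm_row lam ord0 j by rewrite mxE eqxx mulr1n.
have a_range := inN_diag (lcm_row_gt0 hlam) (inN_unimodular hUu hm) j.
have a_eq_zeta i : (a j ord0 = zeta i j ord0 %[mod `|lam i ord0 j|])%Z.
  have [c ec] := sub_remv_conj m hUu (M_neq0 i) (diag_lam_neq0 i).
  exact: eqz_mod_mulmx_diag ec.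
have /andP[a_ge0 a_lt] := a_range; rewrite Lam_jj.
split=> // t t_ge0 t_lt t_eq_zeta.
apply: (eqz_mod_small _ a_range); first by rewrite t_ge0.
by apply: eqz_mod_lcm_row => i; rewrite t_eq_zeta a_eq_zeta.
Qed.
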